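(* Let $G$ be a graph with a distinguished vertex $v$. For each $m\ge0$ let $G_m$ be the graph obtained by attaching one endvertex of a new $m$-vertex path to $v$ by an edge (so $G_m$ has $m$ more vertices than $G$), and let $R_m(z)$ be the reciprocal polynomial of $G_m$. Then there is a monic integer polynomial $P(z)$, depending on $G$ and $v$ but not on $m$, such that for all $m\ge2$, $$(y^2-1)R_m(z)=y^{2m}P(z)-P^*(z),$$ where $P^*(z)=z^{\deg P}P(1/z)$.
   Context: Graphs are finite simple graphs; $\chi_G$ is the characteristic polynomial of the adjacency matrix of an $n$-vertex graph $G$. The reciprocal polynomial is $R_G(z)=z^n\chi_G(z+1/z)$ if $G$ is nonbipartite and $R_G(z)=z^{n/2}\chi_G(\sqrt z+1/\sqrt z)$ if $G$ is bipartite. Here $y=\sqrt z$ if the graph ($G$, equivalently each $G_m$) is bipartite, and $y=z$ otherwise. *)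

From HB Require Import structures.
From mathcomp Require Import all_boot all_order all_algebra.
Set Implicit Arguments. Unset Strict Implicit. Unset Printing Implicit Defensive.
Import Order.TTheory GRing.Theory Num.Theory.
Local Open Scope ring_scope.

Definition simple_graph (T : finType) (e : rel T) : Prop :=
  (forall x y, e x y = e y x) /\ (forall x, e x x = false).

Definition bipartite (T : finType) (e : rel T) : bool :=
  [exists f : {ffun T -> bool}, [forall x, [forall y, e x y ==> (f x != f y)]]].

Definition adjmx (T : finType) (e : rel T) : 'M[int]_#|T| :=
  \matrix_(i, j) (e (enum_val i) (enum_val j))%:R.

Definition charpolyG (T : finType) (e : rel T) : {poly int} :=
  char_poly (adjmx e).

(* z^n p(z + 1/z) written out: sum_k p_k (z^2+1)^k z^(n-k), for deg p <= n. *)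
Definition recip_nb (p : {poly int}) (n : nat) : {poly int} :=
  \sum_(k < n.+1) p`_k *: ((('X ^+ 2 + 1) ^+ k) * 'X ^+ (n - k)).

(* Bipartite: z^(n/2) chi(sqrt z + 1/sqrt z), i.e. the polynomial R with
   R(w^2) = w^n chi(w + 1/w); it is obtained by keeping the even coefficients
   of w^n chi(w+1/w) (which is an even polynomial in w for bipartite G). *)
Definition recipG (T : finType) (e : rel T) : {poly int} :=
  let R := recip_nb (charpolyG e) #|T| in
  if bipartite e then \poly_(i < #|T|.+1) R`_(i.*2)%N else R.

Definition path_ext (T : finType) (e : rel T) (v : T) (m : nat)
  : rel (T + 'I_m)%type :=
  fun a b => match a, b with
  | inl x, inl y => e x y
  | inl x, inr j => (x == v) && (val j == 0%N)
  | inr i, inl y => (y == v) && (val i == 0%N)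
  | inr i, inr j => (val i == (val j).+1) || (val j == (val i).+1)
  end.

Definition recip_poly (P : {poly int}) : {poly int} :=
  \poly_(i < size P) P`_(size P - 1 - i).
Arguments path_ext {T} e v m _ _.

From HB Require Import structures.
From mathcomp Require Import all_boot all_order all_algebra perm.
From mathcomp Require Import zify ring.
Set Implicit Arguments. Unset Strict Implicit. Unset Printing Implicit Defensive.
Import Order.TTheory GRing.Theory Num.Theory.
Local Open Scope ring_scope.

(* Deleting the free end of the pendant path and expanding det(xI - A) along it gives
   chi_(m+2) = x chi_(m+1) - chi_m.  Substituting x = y + 1/y and clearing denominators,
   R_(m+2) = (y^2 + 1) R_(m+1) - y^2 R_m, a recurrence with characteristic roots 1 and y^2,
   whence (y^2 - 1) R_m = y^(2m) (R_1 - R_0) - (R_1 - y^2 R_0).  Each R_m is palindromic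
   of degree deg R_0 + m deg y^2 with leading coefficient 1, so P := R_1 - R_0 is monic
   and P^* = R_1 - y^2 R_0. *)

Lemma char_poly_conj_perm (R : comNzRingType) k (A : 'M[R]_k) (s : 'S_k) :
  char_poly (\matrix_(i, j) A (s i) (s j)) = char_poly A.
Proof.
rewrite /char_poly.
have -> : char_poly_mx (\matrix_(i, j) A (s i) (s j))
        = row_perm s (col_perm s (char_poly_mx A)).
  by apply/matrixP => i j; rewrite !mxE (inj_eq perm_inj).
rewrite row_permE col_permE !det_mulmx !det_perm odd_permV.
by rewrite mulrC -mulrA -signr_addb addbb expr0 mulr1.
Qed.

Lemma charpolyG_enum (S : finType) (r : rel S) k (g : 'I_k -> S) :
  injective g -> k = #|S| ->
  charpolyG r = char_poly (\matrix_(i, j) (r (g i) (g j))%:R).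
Proof.
move=> g_inj Ek; subst k.
have rank_g_inj : injective (enum_rank \o g) by move=> x y /enum_rank_inj /g_inj.
rewrite /charpolyG -(char_poly_conj_perm _ (perm rank_g_inj)); congr char_poly.
by apply/matrixP => i j; rewrite /adjmx !mxE !permE /= !enum_rankK.
Qed.

Lemma char_poly_pendant (R : comNzRingType) k (A : 'M[R]_k.+2) :
  A ord0 ord0 = 0 ->
  (forall i : 'I_k.+1, A ord0 (lift ord0 i) = (i == ord0)%:R) ->
  (forall i : 'I_k.+1, A (lift ord0 i) ord0 = (i == ord0)%:R) ->
  char_poly A = 'X * char_poly (row' ord0 (col' ord0 A))
              - char_poly (row' ord0 (col' ord0 (row' ord0 (col' ord0 A)))).
Proof.
move=> A00 A0S AS0; set M := char_poly_mx A.
have M0S i : M ord0 (lift ord0 i) = - (i == ord0)%:R.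
  by rewrite !mxE A0S sub0r; case: eqP => // _; rewrite polyC1.
have MS0 i : M (lift ord0 i) ord0 = - (i == ord0)%:R.
  by rewrite !mxE AS0 sub0r; case: eqP => // _; rewrite polyC1.
rewrite /char_poly -/M (expand_det_row _ ord0) big_ord_recl big_ord_recl big1; last first.
  by move=> i _; rewrite M0S mulr0n oppr0 mul0r.
have lift10 : lift (lift ord0 ord0) (ord0 : 'I_k.+1) = ord0 by exact: val_inj.
have M00 : M ord0 ord0 = 'X by rewrite !mxE A00 subr0 mulr1n.
rewrite M00 M0S mulN1r addr0 /cofactor !expr0 !mul1r row'_col'_char_poly_mx.
congr (_ + _).
rewrite (expand_det_col _ ord0) big_ord_recl big1; last first.
  by move=> i _; rewrite mxE [col' _ _ _ _]mxE lift10 MS0 mulr0n oppr0 mul0r.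
rewrite addr0 mxE [col' _ _ _ _]mxE lift10 MS0 eqxx mulr1n mulN1r opprK.
rewrite /cofactor expr0 mul1r mulN1r; congr (- \det _); apply/matrixP => i j.
have lift1S : lift (lift ord0 ord0) (lift ord0 j) = lift ord0 (lift ord0 j).
  exact: val_inj.
by rewrite -!row'_col'_char_poly_mx !mxE lift1S !(inj_eq lift_inj).
Qed.

Section Reversal.
Variable R : nzRingType.
Implicit Types p q : {poly R}.

Definition revp d p : {poly R} := \poly_(i < d.+1) p`_(d - i).

Lemma coef_revp d p i : (revp d p)`_i = if (i <= d)%N then p`_(d - i) else 0.
Proof. by rewrite coef_poly ltnS. Qed.

Lemma revpD d : {morph revp d : p q / p + q}.
Proof.
by move=> p q; apply/polyP => i; rewrite coefD !coef_revp coefD; case: leqP; rewrite ?addr0.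
Qed.

Lemma revpZ d a p : revp d (a *: p) = a *: revp d p.
Proof.
by apply/polyP => i; rewrite coefZ !coef_revp coefZ; case: leqP; rewrite ?mulr0.
Qed.

HB.instance Definition _ d :=
  GRing.isSemilinear.Build R {poly R} {poly R} _ (revp d) (revpZ d, revpD d).

Lemma size_revp d p : (size (revp d p) <= d.+1)%N.
Proof. exact: size_poly. Qed.

Lemma coef_revp_gt d p i : (d < i)%N -> (revp d p)`_i = 0.
Proof. by rewrite coef_revp ltnNge => /negbTE ->. Qed.

Lemma revpMXn d k p : revp (d + k) ('X^k * p) = revp d p.
Proof.
apply/polyP => i; rewrite !coef_revp coefXnM.
case: (leqP i d) => [le_id | lt_di].
  by rewrite ifT ?ifF; [congr p`_ _ | |]; lia.
by case: ifP => // le_i; rewrite ifT //; lia.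
Qed.

Lemma revp_pad d k p : (size p <= d.+1)%N -> revp (d + k) p = 'X^k * revp d p.
Proof.
move=> /leq_sizeP p_small; apply/polyP => i; rewrite coefXnM !coef_revp.
case: (ltnP i k) => [lt_ik | le_ki]; first by rewrite p_small ?if_same //; lia.
by rewrite leq_subLR addnC; case: leqP => // _; congr p`_ _; lia.
Qed.

Lemma revp_even_poly d p : revp d (even_poly p) = even_poly (revp d.*2 p).
Proof.
apply/polyP => i; rewrite coef_even_poly !coef_revp coef_even_poly leq_double.
by case: leqP => // _; rewrite doubleB.
Qed.

Lemma revp_X2D1_exp k : revp k.*2 (('X^2 + 1) ^+ k) = ('X^2 + 1) ^+ k.
Proof.
elim: k => [|k IH].
  by rewrite expr0 -polyC1; apply/polyP => -[|i]; rewrite coef_revp !coefC.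
rewrite exprS mulrDl mul1r raddfD /= doubleS -addn2 revpMXn revp_pad.
  by rewrite IH addrC.
by rewrite -IH size_revp.
Qed.

End Reversal.

Lemma even_polyX2M (R : nzRingType) (p : {poly R}) :
  even_poly ('X^2 * p) = 'X * even_poly p.
Proof. by rewrite -commr_polyXn expr2 mulrA even_polyMX odd_polyMX commr_polyX. Qed.

Lemma recip_poly_revp d (p : {poly int}) : size p = d.+1 -> recip_poly p = revp d p.
Proof. by rewrite /recip_poly /revp => ->; rewrite subn1. Qed.

Lemma palindromicB_monic_recip d k (A B : {poly int}) : (0 < k)%N ->
  revp (d + k) A = A -> A`_(d + k) = 1 -> revp d B = B ->
  (A - B) \is monic /\ recip_poly (A - B) = A - 'X^k * B.
Proof.
move=> k_gt0 palA topA palB.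
have B_top : B`_(d + k) = 0 by rewrite -palB coef_revp_gt //; lia.
have AB_top : (A - B)`_(d + k) = 1 by rewrite coefB topA B_top subr0.
have size_AB : size (A - B) = (d + k).+1.
  apply/anti_leq/andP; split; last first.
    rewrite ltnNge; apply/negP => /leq_sizeP/(_ _ (leqnn _))/eqP.
    by rewrite AB_top oner_eq0.
  apply/leq_sizeP => i lt_i; rewrite coefB -palA -palB !coef_revp_gt ?subr0 //; lia.
split; first by rewrite monicE lead_coefE size_AB AB_top.
rewrite (recip_poly_revp size_AB) raddfB /= palA revp_pad ?palB // -palB; exact: size_revp.
Qed.

Lemma recip_nb_palindromic (p : {poly int}) d :
  revp d.*2 (recip_nb p d) = recip_nb p d.
Proof.
rewrite /recip_nb raddf_sum; apply: eq_bigr => -[k /= lt_kd] _.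
rewrite linearZ /=; congr (_ *: _).
have -> : d.*2 = (k.*2 + (d - k) + (d - k))%N by rewrite -!addnn; lia.
rewrite mulrC revpMXn revp_pad ?revp_X2D1_exp // -revp_X2D1_exp; exact: size_revp.
Qed.

Lemma size_recip_nb (p : {poly int}) d : (size (recip_nb p d) <= d.*2.+1)%N.
Proof. by rewrite -recip_nb_palindromic size_revp. Qed.

Lemma coef_recip_nb_top (p : {poly int}) d : (recip_nb p d)`_d.*2 = p`_d.
Proof.
rewrite -recip_nb_palindromic coef_revp leqnn subnn -horner_coef0 /recip_nb.
rewrite horner_sum big_ord_recr /= big1 => [|k _]; rewrite !hornerE.
  by rewrite /= subnn expr0 expr1n !mulr1.
by rewrite /= expr0n subn_eq0 leqNgt ltn_ord mulr0.
Qed.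

Lemma recip_nbB (p q : {poly int}) d :
  recip_nb (p - q) d = recip_nb p d - recip_nb q d.
Proof. by rewrite /recip_nb -sumrB; apply: eq_bigr => i _; rewrite coefB scalerBl. Qed.

Lemma recip_nbS (p : {poly int}) d :
  (size p <= d.+1)%N -> recip_nb p d.+1 = 'X * recip_nb p d.
Proof.
move=> /leq_sizeP p_small; rewrite /recip_nb big_ord_recr /= p_small // scale0r addr0.
rewrite mulr_sumr; apply: eq_bigr => i _ /=.
rewrite subSn; last by rewrite -ltnS.
by rewrite (exprS _ (d - i)) mulrCA scalerAr.
Qed.

Lemma recip_nbXM (p : {poly int}) d :
  recip_nb ('X * p) d.+1 = ('X^2 + 1) * recip_nb p d.
Proof.
rewrite /recip_nb big_ord_recl coefXM eqxx scale0r add0r mulr_sumr.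
by apply: eq_bigr => i _ /=; rewrite coefXM /= subSS (exprS _ i) -mulrA scalerAr.
Qed.

Lemma recurrence_closed_form (R : comNzRingType) (y : R) (u : nat -> R) :
  (forall m, u m.+2 = (y + 1) * u m.+1 - y * u m) ->
  forall m, (y - 1) * u m = y ^+ m * (u 1%N - u 0%N) - (u 1%N - y * u 0%N).
Proof.
move=> u_rec m.
pose c m := y ^+ m * (u 1%N - u 0%N) - (u 1%N - y * u 0%N).
suff [] : (y - 1) * u m = c m /\ (y - 1) * u m.+1 = c m.+1 by [].
rewrite /c; elim: m => [|m [IHm IHm1]]; first by split; ring.
split=> //; transitivity ((y + 1) * ((y - 1) * u m.+1) - y * ((y - 1) * u m)).
  by rewrite u_rec; ring.
by rewrite IHm IHm1 !exprS; ring.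
Qed.

Lemma palindromic_recurrence_closed_form k d (u : nat -> {poly int}) :
  (0 < k)%N ->
  (forall m, u m.+2 = ('X^k + 1) * u m.+1 - 'X^k * u m) ->
  (forall m, revp (k * (m + d)) (u m) = u m) ->
  (forall m, (u m)`_(k * (m + d)) = 1) ->
  exists2 P, P \is monic &
    forall m, ('X^k - 1) * u m = 'X^(k * m) * P - recip_poly P.
Proof.
move=> k_gt0 u_rec u_pal u_top.
have deg1 : (k * (1 + d) = k * d + k)%N by rewrite mulnDr muln1 addnC.
have [|||P_monic P_recip] := @palindromicB_monic_recip (k * d) k (u 1%N) (u 0%N) k_gt0.
- by rewrite -deg1 u_pal.
- by rewrite -deg1 u_top.
- by rewrite -[d]add0n u_pal.
exists (u 1%N - u 0%N) => // m.
by rewrite P_recip exprM; apply: recurrence_closed_form.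
Qed.

Lemma bipartite_path_ext (T : finType) (e : rel T) (v : T) m :
  bipartite (path_ext e v m) = bipartite e.
Proof.
apply/existsP/existsP => [[f /forallP f_col] | [f /forallP f_col]].
  exists [ffun x => f (inl x)]; apply/forallP => x; apply/forallP => y.
  by rewrite !ffunE; exact: (forallP (f_col (inl x)) (inl y)).
exists [ffun a : T + 'I_m =>
          match a with inl x => f x | inr j => ~~ f v (+) odd j end].
apply/forallP => -[x|i]; apply/forallP => -[y|j]; rewrite !ffunE /=.
- exact: (forallP (f_col x) y).
- by apply/implyP => /andP[/eqP -> /eqP ->]; case: (f v).
- by apply/implyP => /andP[/eqP -> /eqP ->]; case: (f v).
- by apply/implyP => /orP[/eqP -> | /eqP ->] /=; case: (f v); case: (odd _).
Qed.

Section PathExtension.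
Variables (T : finType) (e : rel T) (v : T).
Local Notation n := #|T|.

(* Index 0 is the free end [inr (m - 1)] of the path, so deleting row and column 0
   of the adjacency matrix of G_m leaves that of G_(m-1). *)
Definition path_vertex m (a : 'I_m + 'I_n) : T + 'I_m :=
  match a with inl j => inr (rev_ord j) | inr k => inl (enum_val k) end.

Definition path_enum m (i : 'I_(m + n)) : T + 'I_m := path_vertex (split i).

Definition widen_vertex m (a : T + 'I_m) : T + 'I_m.+1 :=
  match a with inl x => inl x | inr j => inr (widen_ord (leqnSn m) j) end.

Definition path_adjmx m : 'M[int]_(m + n) :=
  \matrix_(i, j) (path_ext e v m (path_enum i) (path_enum j))%:R.

Lemma path_enum_inj m : injective (@path_enum m).
Proof.
move=> i j; rewrite /path_enum => eq_ij; apply: (can_inj splitK).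
case: (split i) (split j) eq_ij => [a|a] [b|b] //= [eq_ab].
  by congr inl; apply/rev_ord_inj/val_inj.
by rewrite (enum_val_inj eq_ab).
Qed.

Lemma path_enum0 m : path_enum (ord0 : 'I_(m.+1 + n)) = inr ord_max.
Proof.
have -> : ord0 = unsplit (inl ord0) :> 'I_(m.+1 + n) by exact: val_inj.
by rewrite /path_enum unsplitK; congr inr; apply: val_inj; rewrite /= subn1.
Qed.

Lemma path_enum_lift m (i : 'I_(m + n)) :
  path_enum (lift ord0 i : 'I_(m.+1 + n)) = widen_vertex (path_enum i).
Proof.
rewrite /path_enum -[i]splitK; case: (split i) => [j|k]; rewrite unsplitK.
- have -> : lift ord0 (unsplit (inl j)) = unsplit (inl (lift ord0 j)) :> 'I_(m.+1 + n).
    exact: val_inj.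
  by rewrite unsplitK; congr inr; apply: val_inj; rewrite /= subSS.
- have -> : lift ord0 (unsplit (inr k)) = unsplit (inr k) :> 'I_(m.+1 + n).
    exact: val_inj.
  by rewrite unsplitK.
Qed.

Lemma path_ext_widen m a b :
  path_ext e v m.+1 (widen_vertex a) (widen_vertex b) = path_ext e v m a b.
Proof. by case: a => [x|i]; case: b => [y|j]. Qed.

Lemma path_ext_inrC m a (j : 'I_m) :
  path_ext e v m a (inr j) = path_ext e v m (inr j) a.
Proof. by case: a => [x|i] //=; rewrite orbC. Qed.

Lemma path_ext_end m (a : T + 'I_m.+1) :
  path_ext e v m.+2 (inr ord_max) (widen_vertex a) = (a == inr ord_max).
Proof.
case: a => [x|j] /=; first by rewrite andbF.
by rewrite eqSS (ltn_eqF (leqW (ltn_ord j))) orbF eq_sym.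
Qed.

Lemma path_adjmx_minor m : row' ord0 (col' ord0 (path_adjmx m.+1)) = path_adjmx m.
Proof. by apply/matrixP => i j; rewrite !mxE !path_enum_lift path_ext_widen. Qed.

Lemma charpolyG_path_ext m : charpolyG (path_ext e v m) = char_poly (path_adjmx m).
Proof.
by apply: charpolyG_enum; [exact: path_enum_inj | rewrite card_sum card_ord addnC].
Qed.

Lemma charpolyG_path_ext_rec m :
  charpolyG (path_ext e v m.+2)
  = 'X * charpolyG (path_ext e v m.+1) - charpolyG (path_ext e v m).
Proof.
rewrite !charpolyG_path_ext -[path_adjmx m]path_adjmx_minor.
rewrite -[path_adjmx m.+1]path_adjmx_minor; apply: char_poly_pendant => [|i|i];
  rewrite mxE path_enum0 ?path_enum_lift.
- by rewrite /= eqSS orbb (ltn_eqF (ltnSn _)).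
- by rewrite path_ext_end -path_enum0 (inj_eq (@path_enum_inj _)).
- by rewrite path_ext_inrC path_ext_end -path_enum0 (inj_eq (@path_enum_inj _)).
Qed.

Local Notation recip_path m := (recip_nb (charpolyG (path_ext e v m)) (m + n)).

Lemma size_charpolyG_path_ext m : size (charpolyG (path_ext e v m)) = (m + n).+1.
Proof. by rewrite charpolyG_path_ext size_char_poly. Qed.

Lemma coef_charpolyG_path_ext_top m : (charpolyG (path_ext e v m))`_(m + n) = 1.
Proof.
have /monicP := char_poly_monic (path_adjmx m).
by rewrite lead_coefE size_char_poly charpolyG_path_ext.
Qed.

Lemma recip_path_ext_rec m :
  recip_path m.+2 = ('X^2 + 1) * recip_path m.+1 - 'X^2 * recip_path m.
Proof.
rewrite charpolyG_path_ext_rec recip_nbB !addSn recip_nbXM.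
rewrite !(recip_nbS (p := charpolyG (path_ext e v m))) ?size_charpolyG_path_ext //.
by rewrite mulrA -expr2.
Qed.

Lemma recipG_path_ext m : recipG (path_ext e v m)
  = if bipartite e then even_poly (recip_path m) else recip_path m.
Proof.
rewrite /recipG bipartite_path_ext card_sum card_ord addnC; case: ifP => // _.
by rewrite -(even_polyE (s := (m + n).+1)) // (leq_trans (size_recip_nb _ _)).
Qed.

Local Notation k := (if bipartite e then 1%N else 2%N).

Lemma recipG_path_ext_rec m : recipG (path_ext e v m.+2)
  = ('X^k + 1) * recipG (path_ext e v m.+1) - 'X^k * recipG (path_ext e v m).
Proof.
rewrite !recipG_path_ext recip_path_ext_rec; case: ifP => // _.
by rewrite mulrDl mul1r !raddfB !raddfD /= !even_polyX2M expr1 mulrDl mul1r.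
Qed.

Lemma recipG_path_ext_palindromic m :
  revp (k * (m + n)) (recipG (path_ext e v m)) = recipG (path_ext e v m).
Proof.
rewrite recipG_path_ext; case: ifP => _; last by rewrite mul2n recip_nb_palindromic.
by rewrite mul1n revp_even_poly recip_nb_palindromic.
Qed.

Lemma coef_recipG_path_ext_top m : (recipG (path_ext e v m))`_(k * (m + n)) = 1.
Proof.
rewrite recipG_path_ext -(coef_charpolyG_path_ext_top m).
by case: ifP => _; rewrite ?mul1n ?coef_even_poly ?mul2n coef_recip_nb_top.
Qed.

End PathExtension.

Theorem lemma10 (T : finType) (e : rel T) (v : T) :
  simple_graph e ->
  exists P : {poly int}, P \is monic /\
    forall m : nat, (2 <= m)%N ->
      let k := if bipartite e then 1%N else 2%N in
      ('X ^+ k - 1) * recipG (path_ext e v m)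
        = 'X ^+ (k * m) * P - recip_poly P.
Proof.
move=> _.
have k_gt0 : (0 < if bipartite e then 1 else 2)%N by case: bipartite.
have [P P_monic closed_form] := palindromic_recurrence_closed_form k_gt0
  (recipG_path_ext_rec e v) (recipG_path_ext_palindromic e v)
  (coef_recipG_path_ext_top e v).
by exists P; split=> // m _; apply: closed_form.
Qed.
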